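(* Let $S_0=\sum_{k=0}^\infty \frac{1}{(3k+1)(k+1)}=\frac{\pi\sqrt3}{12}+\frac34\log 3$. Then \begin{align*} &\sum_{n=0}^\infty \frac{9n+7}{(n+1)(3n+1)}\,\frac{(\frac53)_n}{(\frac32)_n}\,\frac{1}{4^n}=6S_0,\\ &\sum_{n=0}^\infty \frac{9n+5}{n+1}\,\frac{(\frac13)_n^2}{(\frac53)_n(\frac76)_n}\,\frac{1}{4^n}=4S_0,\\ &\sum_{n=0}^\infty (189n^2+222n+61)\,\frac{(\frac13)_n^2(1)_n}{(\frac76)_n(\frac32)_n^2}\,\frac{1}{64^n}=48S_0,\\ &\sum_{n=0}^\infty \frac{30n^2+35n+11}{(1+2n)(1+n)}\,\frac{(\frac13)_n}{(\frac76)_n}\,\frac{1}{(-4)^n}=8S_0,\\ &\sum_{n=0}^\infty \frac{90n^2+111n+31}{(1+6n)(2+3n)(1+n)}\,\frac{(\frac13)_n}{(\frac32)_n}\,\frac{1}{(-4)^n}=12S_0. \end{align*}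
   Context: $(x)_n=\Gamma(x+n)/\Gamma(x)=x(x+1)\cdots(x+n-1)$ denotes the rising factorial (Pochhammer symbol). *)

From Stdlib Require Import Reals.
From Coquelicot Require Import Coquelicot.
Open Scope R_scope.

Fixpoint poch (x : R) (n : nat) : R :=
  match n with
  | O => 1
  | S m => poch x m * (x + INR m)
  end.

Definition S0 : R := PI * sqrt 3 / 12 + 3 / 4 * ln 3.

From Stdlib Require Import Reals Lra Lia.
From Coquelicot Require Import Coquelicot.
Open Scope R_scope.

(* The five identities are instances of the Wilf-Zeilberger method.  For each
   of them there is a hypergeometric kernel K(n,k) and polynomials P(n), Q(n,k)
   such that F = K P and G = K Q form a WZ pair,
     F(n+1,k) - F(n,k) = G(n,k+1) - G(n,k).
   Summing this over the triangle 0 <= n < k < N shows that the partial sums of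
   the column F(0,k), a multiple of 1/((3k+1)(k+1)), and of the diagonal
   F(n,n) + G(n,n+1), a multiple of the given summand, differ by
   sum_(n<N) G(n,N); that error tends to 0 because G(n,N) decays geometrically
   in n.  The value of S_0 comes from
   1/((3k+1)(k+1)) = 3/2 * int_0^1 (x^(3k) - x^(3k+2)) dx, summed in closed form
   against the primitive ln(1+x+x^2)/2 + atan((2x+1)/sqrt 3)/sqrt 3 of
   (1+x)/(1+x+x^2); instead of integrals, the tail is bounded by comparing
   derivatives. *)

Fixpoint psum (f : nat -> R) (N : nat) : R :=
  match N with O => 0 | S m => psum f m + f m end.

Fixpoint pprod (f : nat -> R) (N : nat) : R :=
  match N with O => 1 | S m => pprod f m * f m end.

Lemma sum_n_psum (f : nat -> R) (N : nat) : sum_n f N = psum f (S N).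
Proof.
  induction N as [|N IH].
  - rewrite sum_O; simpl; ring.
  - rewrite sum_Sn, IH; simpl; unfold plus; simpl; ring.
Qed.

Lemma psum_ext (f g : nat -> R) (N : nat) :
  (forall i, (i < N)%nat -> f i = g i) -> psum f N = psum g N.
Proof.
  induction N as [|N IH]; intros Hfg; simpl; [reflexivity|].
  rewrite IH by (intros; apply Hfg; lia); rewrite Hfg by lia; reflexivity.
Qed.

Lemma psum_scal (c : R) (f : nat -> R) (N : nat) :
  psum (fun i => c * f i) N = c * psum f N.
Proof. induction N as [|N IH]; simpl; [|rewrite IH]; ring. Qed.

Lemma psum_minus (f g : nat -> R) (N : nat) :
  psum (fun i => f i - g i) N = psum f N - psum g N.
Proof. induction N as [|N IH]; simpl; [|rewrite IH]; ring. Qed.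

Lemma psum_telescope (f : nat -> R) (N : nat) :
  psum (fun i => f (S i) - f i) N = f N - f O.
Proof. induction N as [|N IH]; simpl; [|rewrite IH]; ring. Qed.

Lemma Rabs_psum_le (f : nat -> R) (N : nat) :
  Rabs (psum f N) <= psum (fun i => Rabs (f i)) N.
Proof.
  induction N as [|N IH]; simpl.
  - rewrite Rabs_R0; lra.
  - eapply Rle_trans; [apply Rabs_triang | lra].
Qed.

Lemma psum_abs_ratio_le (g : nat -> R) (r : R) (N : nat) :
  0 <= r < 1 ->
  (forall n, (S n < N)%nat -> Rabs (g (S n)) <= r * Rabs (g n)) ->
  psum (fun n => Rabs (g n)) N <= Rabs (g O) / (1 - r).
Proof.
  intros Hr Hratio.
  assert (Hpow : forall n, (n < N)%nat -> Rabs (g n) <= r ^ n * Rabs (g O)).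
  { induction n as [|n IH]; intros Hn; simpl; [lra|].
    eapply Rle_trans; [apply Hratio; lia|].
    rewrite Rmult_assoc; apply Rmult_le_compat_l; [lra | apply IH; lia]. }
  assert (Hsum : forall M, (M <= N)%nat ->
            psum (fun n => Rabs (g n)) M <= Rabs (g O) * (1 - r ^ M) / (1 - r)).
  { induction M as [|M IH]; intros HM; simpl.
    - unfold Rdiv; rewrite Rminus_diag, Rmult_0_r, Rmult_0_l; lra.
    - eapply Rle_trans; [apply Rplus_le_compat; [apply IH | apply Hpow]; lia|].
      apply Req_le; field; lra. }
  eapply Rle_trans; [apply Hsum; lia|].
  unfold Rdiv; apply Rmult_le_compat_r; [apply Rlt_le, Rinv_0_lt_compat; lra|].
  pose proof (pow_le r N ltac:(lra)); pose proof (Rabs_pos (g O)); nra.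
Qed.

(** * Wilf-Zeilberger pairs *)

Lemma wz_remainder_vanishes (G : nat -> nat -> R) (r : R) :
  0 <= r < 1 ->
  (forall n k, (S n < k)%nat -> Rabs (G (S n) k) <= r * Rabs (G n k)) ->
  is_lim_seq (G O) 0 ->
  is_lim_seq (fun K => psum (fun n => G n K) K) 0.
Proof.
  intros Hr Hratio HG0.
  apply is_lim_seq_abs_0.
  apply (is_lim_seq_le_le (fun _ => 0) _ (fun K => Rabs (G O K) / (1 - r))).
  - intros K; split; [apply Rabs_pos|].
    eapply Rle_trans; [apply Rabs_psum_le|].
    apply (psum_abs_ratio_le (fun n => G n K)); auto.
  - apply is_lim_seq_const.
  - replace (Finite 0) with (Rbar_mult 0 (/ (1 - r))) by (simpl; f_equal; ring).
    apply is_lim_seq_scal_r.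
    apply is_lim_seq_abs in HG0; simpl in HG0; rewrite Rabs_R0 in HG0; exact HG0.
Qed.

Section WZPair.

Variables F G : nat -> nat -> R.
Hypothesis wz_pair :
  forall n k, (n < k)%nat -> F (S n) k - F n k = G n (S k) - G n k.

Lemma wz_partial_sum (K : nat) :
  psum (F O) K = psum (fun n => F n n + G n (S n)) K - psum (fun n => G n K) K.
Proof.
  induction K as [|K IH]; simpl; [ring|].
  assert (Hcol : psum (fun n => G n (S K)) K - psum (fun n => G n K) K = F K K - F O K).
  { rewrite <- psum_minus, <- (psum_telescope (fun n => F n K)).
    apply psum_ext; intros n Hn; rewrite wz_pair by lia; ring. }
  lra.
Qed.

Lemma wz_diagonal_series (r l : R) :
  0 <= r < 1 ->
  (forall n k, (S n < k)%nat -> Rabs (G (S n) k) <= r * Rabs (G n k)) ->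
  is_lim_seq (G O) 0 ->
  is_series (F O) l -> is_series (fun n => F n n + G n (S n)) l.
Proof.
  intros Hr Hratio HG0 HF.
  pose proof (wz_remainder_vanishes G r Hr Hratio HG0) as Hrem.
  apply is_lim_seq_incr_1 in Hrem.
  change (is_lim_seq (sum_n (fun n => F n n + G n (S n))) l).
  apply (is_lim_seq_ext (fun N => sum_n (F O) N + psum (fun n => G n (S N)) (S N))).
  - intros N; rewrite !sum_n_psum, wz_partial_sum; ring.
  - replace l with (l + 0) by ring.
    exact (is_lim_seq_plus' _ _ _ _ HF Hrem).
Qed.

End WZPair.

(** * Hypergeometric kernels *)

Section HypergeometricKernel.

Variables nratio kratio : nat -> nat -> R.

(* [nratio n k] and [kratio n k] play the roles of K(n+1,k)/K(n,k) and
   K(n,k+1)/K(n,k).  The kernel is built along the row k = 0 with [nratio]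
   and then along the columns with [kratio]; [ratio_compat] is what makes
   [nratio n k] the n-ratio at every k (lemma [wz_kernel_succ_l]). *)
Definition wz_kernel (n k : nat) : R :=
  pprod (fun i => nratio i O) n * pprod (kratio n) k.

Hypothesis ratio_compat :
  forall n k, nratio n k * kratio (S n) k = kratio n k * nratio n (S k).

Lemma wz_kernel_succ_r (n k : nat) : wz_kernel n (S k) = wz_kernel n k * kratio n k.
Proof. unfold wz_kernel; simpl; ring. Qed.

Lemma wz_kernel_succ_l (n k : nat) : wz_kernel (S n) k = wz_kernel n k * nratio n k.
Proof.
  induction k as [|k IH].
  - unfold wz_kernel; simpl; ring.
  - rewrite !wz_kernel_succ_r, IH, Rmult_assoc, ratio_compat; ring.
Qed.

Lemma wz_kernel_zero_l (s : nat -> R) :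
  s O = 1 -> (forall k, s (S k) = kratio O k * s k) -> forall k, wz_kernel O k = s k.
Proof.
  intros Hs0 HsS k; induction k as [|k IH].
  - unfold wz_kernel; simpl; rewrite Hs0; ring.
  - rewrite wz_kernel_succ_r, IH, HsS; ring.
Qed.

Lemma wz_kernel_pair (P : nat -> R) (Q : nat -> nat -> R) :
  (forall n k, nratio n k * P (S n) - P n = kratio n k * Q n (S k) - Q n k) ->
  forall n k, wz_kernel (S n) k * P (S n) - wz_kernel n k * P n
            = wz_kernel n (S k) * Q n (S k) - wz_kernel n k * Q n k.
Proof.
  intros Hcert n k.
  rewrite wz_kernel_succ_l, wz_kernel_succ_r.
  transitivity (wz_kernel n k * (nratio n k * P (S n) - P n)); [ring|].
  rewrite Hcert; ring.
Qed.

Lemma wz_kernel_ratio_le (Q : nat -> nat -> R) (c : R) :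
  (forall n k, 0 < Q n k) ->
  (forall n k, (S n < k)%nat -> Rabs (nratio n k) * Q (S n) k <= c * Q n k) ->
  forall n k, (S n < k)%nat ->
  Rabs (wz_kernel (S n) k * Q (S n) k) <= c * Rabs (wz_kernel n k * Q n k).
Proof.
  intros HQ Hbound n k Hnk.
  rewrite wz_kernel_succ_l, !Rabs_mult, (Rabs_pos_eq (Q n k)) by (apply Rlt_le, HQ).
  rewrite (Rabs_pos_eq (Q (S n) k)) by (apply Rlt_le, HQ).
  pose proof (Rabs_pos (wz_kernel n k)) as Hk.
  pose proof (Hbound n k Hnk); nra.
Qed.

Lemma wz_kernel_diag_succ (n : nat) :
  wz_kernel (S n) (S n) = wz_kernel n n * nratio n n * kratio (S n) n.
Proof. rewrite wz_kernel_succ_r, wz_kernel_succ_l; reflexivity. Qed.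

Lemma wz_kernel_diagonal (P : nat -> R) (Q : nat -> nat -> R) (t : nat -> R)
    (lam : R) :
  let W n := P n + kratio n n * Q n (S n) in
  (forall n, W n <> 0) ->
  W O = lam * t O ->
  (forall n, t (S n) * W n = t n * (nratio n n * kratio (S n) n * W (S n))) ->
  forall n, wz_kernel n n * P n + wz_kernel n (S n) * Q n (S n) = lam * t n.
Proof.
  intros W HW Hbase Hstep.
  assert (Hdiag : forall n, wz_kernel n n * W n = lam * t n).
  { induction n as [|n IH].
    - unfold wz_kernel; simpl; rewrite <- Hbase; ring.
    - apply (Rmult_eq_reg_r (W n)); [|apply HW].
      rewrite wz_kernel_diag_succ.
      transitivity (wz_kernel n n * W n * (nratio n n * kratio (S n) n * W (S n)));
        [ring|].
      rewrite IH, Rmult_assoc, <- Hstep; ring. }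
  intros n; rewrite wz_kernel_succ_r, <- Hdiag; unfold W; ring.
Qed.

Lemma wz_kernel_series (P : nat -> R) (Q : nat -> nat -> R) (s t : nat -> R)
    (lam c l : R) :
  (forall n k, nratio n k * P (S n) - P n = kratio n k * Q n (S k) - Q n k) ->
  (forall n, 0 < P n) -> (forall n k, 0 < kratio n k) -> (forall n k, 0 < Q n k) ->
  0 <= c < 1 ->
  (forall n k, (S n < k)%nat -> Rabs (nratio n k) * Q (S n) k <= c * Q n k) ->
  s O = 1 -> (forall k, s (S k) = kratio O k * s k) ->
  is_lim_seq (fun k => s k * Q O k) 0 ->
  lam <> 0 ->
  P O + kratio O O * Q O 1%nat = lam * t O ->
  (forall n, t (S n) * (P n + kratio n n * Q n (S n))
             = t n * (nratio n n * kratio (S n) n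
                      * (P (S n) + kratio (S n) (S n) * Q (S n) (S (S n))))) ->
  is_series s l -> is_series t (P O / lam * l).
Proof.
  intros Hcert HP Hkratio HQ Hc Hbound Hs0 HsS Hlim Hlam Hbase Hstep Hs.
  pose proof (wz_kernel_zero_l s Hs0 HsS) as Hkernel0.
  assert (HF : is_series (fun k => wz_kernel O k * P O) (l * P O)).
  { apply (is_series_ext (fun k => s k * P O)); [intros k; rewrite Hkernel0; reflexivity|].
    apply is_series_scal_r, Hs. }
  assert (HG0 : is_lim_seq (fun k => wz_kernel O k * Q O k) 0).
  { apply (is_lim_seq_ext (fun k => s k * Q O k)); [|exact Hlim].
    intros k; rewrite Hkernel0; reflexivity. }
  pose proof (wz_diagonal_series
    (fun n k => wz_kernel n k * P n) (fun n k => wz_kernel n k * Q n k)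
    (fun n k _ => wz_kernel_pair P Q Hcert n k) c (l * P O)
    Hc (wz_kernel_ratio_le Q c HQ Hbound) HG0 HF) as Hdiag.
  apply is_series_scal_r with (c := / lam) in Hdiag.
  replace (P O / lam * l) with (l * P O * / lam) by (field; exact Hlam).
  assert (Ht : forall n,
             (wz_kernel n n * P n + wz_kernel n (S n) * Q n (S n)) * / lam = t n).
  { intros n; rewrite (wz_kernel_diagonal P Q t lam); auto.
    - field; exact Hlam.
    - intros m; pose proof (HP m); pose proof (Hkratio m m); pose proof (HQ m (S m)).
      nra. }
  exact (is_series_ext _ _ _ Ht Hdiag).
Qed.

End HypergeometricKernel.

(** * The value of S_0 *)

Lemma increment_le_of_derive_le (f g df dg : R -> R) (a b : R) :
  a <= b ->
  (forall x, is_derive f x (df x)) -> (forall x, is_derive g x (dg x)) ->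
  (forall x, a <= x <= b -> df x <= dg x) ->
  f b - f a <= g b - g a.
Proof.
  intros Hab Hf Hg Hle.
  assert (Hh : forall x, is_derive (fun y => g y - f y) x (dg x - df x)).
  { intros x; apply (is_derive_minus g f); auto. }
  destruct (MVT_gen (fun y => g y - f y) a b (fun x => dg x - df x)) as (c & Hc & Hmvt).
  - intros x _; apply Hh.
  - intros x _; apply derivable_continuous_pt.
    exists (dg x - df x); apply is_derive_Reals, Hh.
  - rewrite Rmin_left, Rmax_right in Hc by exact Hab.
    pose proof (Hle c Hc); nra.
Qed.

Definition s0_term (k : nat) : R := 1 / ((3 * INR k + 1) * (INR k + 1)).

Lemma s0_term_mul_linear_lim (f : nat -> R) (a b : R) :
  0 <= a -> 0 <= b -> (forall K, f K = a + b * INR K) ->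
  is_lim_seq (fun K => s0_term K * f K) 0.
Proof.
  intros Ha Hb Hf.
  apply (is_lim_seq_le_le (fun _ => 0) _ (fun K => (a + b) * / INR (S K))).
  - intros K; rewrite Hf, S_INR; unfold s0_term; pose proof (pos_INR K).
    assert (Hd : 0 < (3 * INR K + 1) * (INR K + 1)) by nra.
    split.
    + apply Rmult_le_pos; [apply Rlt_le, Rdiv_lt_0_compat; lra | nra].
    + apply (Rmult_le_reg_r ((3 * INR K + 1) * (INR K + 1))); [exact Hd|].
      replace (1 / ((3 * INR K + 1) * (INR K + 1)) * (a + b * INR K)
                 * ((3 * INR K + 1) * (INR K + 1))) with (a + b * INR K)
        by (field; lra).
      replace ((a + b) * / (INR K + 1) * ((3 * INR K + 1) * (INR K + 1)))
        with ((a + b) * (3 * INR K + 1)) by (field; lra).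
      nra.
  - apply is_lim_seq_const.
  - replace (Finite 0) with (Rbar_mult (a + b) 0) by (simpl; f_equal; ring).
    apply is_lim_seq_scal_l.
    assert (Hinf : is_lim_seq (fun n => INR (S n)) p_infty)
      by (apply (is_lim_seq_incr_1 INR), is_lim_seq_INR).
    exact (is_lim_seq_inv _ _ Hinf ltac:(discriminate)).
Qed.

Definition phi3 (x : R) : R := 1 + x + x ^ 2.

Lemma phi3_pos (x : R) : 0 < phi3 x.
Proof. unfold phi3; nra. Qed.

Definition s0_primitive (x : R) : R :=
  / 2 * ln (phi3 x) + / sqrt 3 * atan ((2 * x + 1) / sqrt 3).

Lemma s0_primitive_derive (x : R) : is_derive s0_primitive x ((1 + x) / phi3 x).
Proof.
  pose proof (phi3_pos x) as Hphi; unfold phi3 in Hphi.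
  pose proof (sqrt_lt_R0 3 ltac:(lra)) as Hs.
  pose proof (sqrt_sqrt 3 ltac:(lra)) as Hss.
  unfold s0_primitive, phi3; auto_derive; [lra|].
  transitivity ((1 + 2 * x) / (2 * phi3 x) + 2 / (sqrt 3 * sqrt 3 + (2 * x + 1) ^ 2)).
  - unfold phi3; field; repeat split; nra.
  - rewrite Hss; unfold phi3; field; nra.
Qed.

Lemma s0_primitive_increment : 3 / 2 * (s0_primitive 1 - s0_primitive 0) = S0.
Proof.
  pose proof (sqrt_lt_R0 3 ltac:(lra)) as Hs.
  pose proof (sqrt_sqrt 3 ltac:(lra)) as Hss.
  pose proof PI_RGT_0 as Hpi.
  assert (Hat1 : atan ((2 * 1 + 1) / sqrt 3) = PI / 3).
  { replace (2 * 1 + 1) with (sqrt 3 * sqrt 3) by (rewrite Hss; ring).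
    replace (sqrt 3 * sqrt 3 / sqrt 3) with (sqrt 3) by (field; lra).
    rewrite <- tan_PI3; apply atan_tan; lra. }
  assert (Hat0 : atan ((2 * 0 + 1) / sqrt 3) = PI / 6).
  { replace ((2 * 0 + 1) / sqrt 3) with (1 / sqrt 3) by (field; lra).
    rewrite <- tan_PI6; apply atan_tan; lra. }
  unfold s0_primitive, phi3, S0; rewrite Hat1, Hat0.
  replace (1 + 1 + 1 ^ 2) with 3 by ring; replace (1 + 0 + 0 ^ 2) with 1 by ring.
  rewrite ln_1.
  replace (/ sqrt 3) with (sqrt 3 / (sqrt 3 * sqrt 3)) by (field; lra).
  rewrite Hss.
  field.
Qed.

Definition s0_power_primitive (k : nat) (x : R) : R :=
  x ^ (3 * k + 1) / INR (3 * k + 1) - x ^ (3 * k + 3) / INR (3 * k + 3).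

Lemma s0_power_primitive_derive (k : nat) (x : R) :
  is_derive (s0_power_primitive k) x (x ^ (3 * k) - x ^ (3 * k + 2)).
Proof.
  assert (H1 : 0 < INR (3 * k + 1)) by (apply lt_0_INR; lia).
  assert (H3 : 0 < INR (3 * k + 3)) by (apply lt_0_INR; lia).
  unfold s0_power_primitive; auto_derive; [auto|].
  replace (k + (k + (k + 0)))%nat with (3 * k)%nat by lia.
  replace (Nat.pred (3 * k + 1)) with (3 * k)%nat by lia.
  replace (Nat.pred (3 * k + 3)) with (3 * k + 2)%nat by lia.
  field; lra.
Qed.

Lemma psum_s0_power (N : nat) (x : R) :
  psum (fun k => x ^ (3 * k) - x ^ (3 * k + 2)) N * phi3 x = (1 + x) * (1 - x ^ (3 * N)).
Proof.
  induction N as [|N IH]; cbn [psum]; [simpl; ring|].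
  rewrite Rmult_plus_distr_r, IH; unfold phi3.
  replace (3 * S N)%nat with (3 * N + 3)%nat by lia.
  rewrite !pow_add; ring.
Qed.

Definition s0_remainder (N : nat) (x : R) : R :=
  s0_primitive x - psum (fun k => s0_power_primitive k x) N.

Lemma s0_remainder_derive (N : nat) (x : R) :
  is_derive (s0_remainder N) x ((1 + x) * x ^ (3 * N) / phi3 x).
Proof.
  assert (Hsum : forall M, is_derive (fun y => psum (fun k => s0_power_primitive k y) M) x
                            (psum (fun k => x ^ (3 * k) - x ^ (3 * k + 2)) M)).
  { induction M as [|M IH]; simpl.
    - apply (is_derive_const 0).
    - apply (is_derive_plus (fun y => psum (fun k => s0_power_primitive k y) M)); auto.
      apply s0_power_primitive_derive. }
  replace ((1 + x) * x ^ (3 * N) / phi3 x)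
    with ((1 + x) / phi3 x - psum (fun k => x ^ (3 * k) - x ^ (3 * k + 2)) N).
  - apply (is_derive_minus s0_primitive); [apply s0_primitive_derive | apply Hsum].
  - pose proof (phi3_pos x) as Hphi.
    apply (Rmult_eq_reg_r (phi3 x)); [|lra].
    rewrite Rmult_minus_distr_r, psum_s0_power; field; lra.
Qed.

Lemma s0_remainder_increment_bounds (N : nat) :
  0 <= s0_remainder N 1 - s0_remainder N 0 <= / INR (3 * N + 1).
Proof.
  assert (HN : 0 < INR (3 * N + 1)) by (apply lt_0_INR; lia).
  split.
  - assert (Hinc := increment_le_of_derive_le (fun _ => 0) (s0_remainder N)
                      (fun _ => 0) _ 0 1 ltac:(lra) (fun x => is_derive_const 0 x)
                      (s0_remainder_derive N)).
    cbv beta in Hinc; rewrite Rminus_0_r in Hinc; apply Hinc.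
    intros x Hx; pose proof (phi3_pos x); pose proof (pow_le x (3 * N) ltac:(lra)).
    apply Rdiv_le_0_compat; nra.
  - assert (Hinc := increment_le_of_derive_le (s0_remainder N)
                      (fun x => x ^ (3 * N + 1) / INR (3 * N + 1))
                      _ (fun x => x ^ (3 * N)) 0 1 ltac:(lra) (s0_remainder_derive N)).
    cbv beta in Hinc; rewrite pow1, pow_i in Hinc by lia.
    replace (/ INR (3 * N + 1)) with (1 / INR (3 * N + 1) - 0 / INR (3 * N + 1))
      by (field; lra).
    apply Hinc.
    + intros x; auto_derive; [auto|].
      replace (N + (N + (N + 0)))%nat with (3 * N)%nat by lia.
      replace (Nat.pred (3 * N + 1)) with (3 * N)%nat by lia; field; lra.
    + intros x Hx; pose proof (phi3_pos x); pose proof (pow_le x (3 * N) ltac:(lra)).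
      apply (Rmult_le_reg_r (phi3 x)); [lra|].
      unfold Rdiv; rewrite Rmult_assoc, Rinv_l, Rmult_1_r by lra.
      unfold phi3; nra.
Qed.

Lemma psum_s0_term (N : nat) :
  psum s0_term N = S0 - 3 / 2 * (s0_remainder N 1 - s0_remainder N 0).
Proof.
  rewrite <- s0_primitive_increment; unfold s0_remainder.
  assert (Hat0 : psum (fun k => s0_power_primitive k 0) N = 0).
  { induction N as [|N IH]; simpl; [reflexivity|].
    rewrite IH; unfold s0_power_primitive; rewrite !pow_i by lia; unfold Rdiv; ring. }
  assert (Hat1 : psum (fun k => s0_power_primitive k 1) N = 2 / 3 * psum s0_term N).
  { rewrite <- psum_scal; apply psum_ext; intros k _.
    unfold s0_power_primitive, s0_term; rewrite !pow1, !plus_INR, !mult_INR.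
    pose proof (pos_INR k); simpl (INR 1); simpl (INR 3); field; lra. }
  rewrite Hat0, Hat1; field.
Qed.

Lemma s0_series : is_series s0_term S0.
Proof.
  change (is_lim_seq (sum_n s0_term) S0).
  apply (is_lim_seq_le_le (fun N => S0 - 3 / 2 * / INR (3 * S N + 1)) _ (fun _ => S0)).
  - intros N; rewrite sum_n_psum, psum_s0_term.
    pose proof (s0_remainder_increment_bounds (S N)); lra.
  - assert (Hinf : is_lim_seq (fun N => INR (3 * S N + 1)) p_infty).
    { apply (is_lim_seq_le_p_loc INR); [exists O; intros N _; apply le_INR; lia|].
      apply is_lim_seq_INR. }
    pose proof (is_lim_seq_inv _ _ Hinf ltac:(discriminate)) as Hinv.
    apply (is_lim_seq_scal_l _ (3 / 2)) in Hinv.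
    apply (is_lim_seq_minus' _ _ _ _ (is_lim_seq_const S0)) in Hinv.
    replace (Finite S0) with (Finite (S0 - 3 / 2 * 0)) by (f_equal; ring); exact Hinv.
  - apply is_lim_seq_const.
Qed.

(** * The five certificates *)

Lemma poch_pos (a : R) (n : nat) : 0 < a -> 0 < poch a n.
Proof.
  intros Ha; induction n as [|n IH]; simpl; [lra|].
  pose proof (pos_INR n); apply Rmult_lt_0_compat; lra.
Qed.

Lemma shift_past_succ (P : nat -> nat -> Prop) :
  (forall n z, P n (n + 2 + z)%nat) -> forall n k, (S n < k)%nat -> P n k.
Proof.
  intros HP n k Hnk; replace k with (n + 2 + (k - n - 2))%nat by lia; apply HP.
Qed.

Ltac pos_INR_all :=
  repeat match goal with
  | n : nat |- _ =>
      lazymatch goal with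
      | _ : 0 <= INR n |- _ => fail
      | _ => pose proof (pos_INR n)
      end
  end.

Ltac positivity :=
  repeat match goal with
  | |- 0 < _ * _ => apply Rmult_lt_0_compat
  | |- 0 < _ / _ => apply Rdiv_lt_0_compat
  | |- 0 < / _ => apply Rinv_0_lt_compat
  | |- 0 < poch _ _ => apply poch_pos
  | |- 0 < _ ^ _ => apply pow_lt
  end; nra.

Ltac nonneg_poly :=
  repeat first [apply Rplus_le_le_0_compat | apply Rmult_le_pos | apply pow_le]; lra.

Ltac nonzero :=
  repeat match goal with
  | |- _ /\ _ => split
  | |- _ ^ _ <> 0 => apply pow_nonzero; lra
  | |- _ <> 0 => apply Rgt_not_eq; unfold Rgt; positivity
  end.

(* Closes the rational-function identities (WZ equation, ratio compatibility,
   ratio of the summand, value at n = 0) and the positivity side conditions of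
   [wz_kernel_series]; the decay bound, the limit of G(0,k) and the column
   series remain. *)
Ltac wz_side :=
  intros; pos_INR_all; rewrite ?S_INR; cbn [INR poch pow];
  first [lra | solve [field; nonzero] | positivity].

(* With k = n + 2 + z, the difference of the two sides is a rational function
   of INR n and INR z whose numerator and denominator have nonnegative
   coefficients. *)
Ltac nratio_bound :=
  apply shift_past_succ; intros n z;
  rewrite ?S_INR, !plus_INR; cbn [INR]; pos_INR_all;
  rewrite ?Rabs_Ropp, Rabs_pos_eq by (apply Rlt_le; positivity);
  apply Rminus_le_0; field_simplify;
  [apply Rdiv_le_0_compat;
     [nonneg_poly | first [positivity | apply Rplus_le_lt_0_compat; [nonneg_poly | lra]]]
  | nonzero ..].

Definition summand1 (n : nat) : R :=
  (9 * INR n + 7) / ((INR n + 1) * (3 * INR n + 1))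
  * (poch (5/3) n / poch (3/2) n) * / 4 ^ n.
Definition nratio1 (n k : nat) : R :=
  (INR n + 5/3) * (INR n + 1) / ((INR n + INR k + 2) * (INR n + 2)).
Definition kratio1 (n k : nat) : R :=
  (INR k + 1/3) * (INR k + 1) / ((INR k + 4/3) * (INR n + INR k + 2)).
Definition wzP1 (n : nat) : R := 3 + 3 * INR n.
Definition wzQ1 (n k : nat) : R := 1 + 3 * INR k.

Lemma nratio1_bound (n k : nat) :
  (S n < k)%nat -> Rabs (nratio1 n k) * wzQ1 (S n) k <= 3/4 * wzQ1 n k.
Proof. revert n k; unfold nratio1, wzQ1; nratio_bound. Qed.

Lemma summand1_series : is_series summand1 (6 * S0).
Proof.
  replace (6 * S0) with (wzP1 O / (1/2) * S0) by (unfold wzP1; simpl; field).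
  apply (wz_kernel_series nratio1 kratio1) with (Q := wzQ1) (s := s0_term) (c := 3/4);
    try (unfold nratio1, kratio1, wzP1, wzQ1, summand1, s0_term; wz_side).
  - exact nratio1_bound.
  - apply (s0_term_mul_linear_lim _ 1 3); [lra | lra | intros; unfold wzQ1; simpl; ring].
  - exact s0_series.
Qed.

Definition summand2 (n : nat) : R :=
  (9 * INR n + 5) / (INR n + 1)
  * (poch (1/3) n ^ 2 / (poch (5/3) n * poch (7/6) n)) * / 4 ^ n.
Definition nratio2 (n k : nat) : R := (INR n + 1/3) / (INR n + INR k + 4/3).
Definition kratio2 (n k : nat) : R :=
  (INR k + 1/3) * (INR k + 1) / ((INR n + INR k + 4/3) * (INR k + 2)).
Definition wzP2 (n : nat) : R := 1.
Definition wzQ2 (n k : nat) : R := (INR k + 1) / (INR n + 1).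

Lemma nratio2_bound (n k : nat) :
  (S n < k)%nat -> Rabs (nratio2 n k) * wzQ2 (S n) k <= 3/4 * wzQ2 n k.
Proof. revert n k; unfold nratio2, wzQ2; nratio_bound. Qed.

Lemma summand2_series : is_series summand2 (4 * S0).
Proof.
  replace (4 * S0) with (wzP2 O / (1/4) * S0) by (unfold wzP2; field).
  apply (wz_kernel_series nratio2 kratio2) with (Q := wzQ2) (s := s0_term) (c := 3/4);
    try (unfold nratio2, kratio2, wzP2, wzQ2, summand2, s0_term; wz_side).
  - exact nratio2_bound.
  - apply (s0_term_mul_linear_lim _ 1 1); [lra | lra | intros; unfold wzQ2; simpl; field].
  - exact s0_series.
Qed.

Definition summand3 (n : nat) : R :=
  (189 * INR n ^ 2 + 222 * INR n + 61)
  * (poch (1/3) n ^ 2 * poch 1 n / (poch (7/6) n * poch (3/2) n ^ 2)) * / 64 ^ n.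
Definition nratio3 (n k : nat) : R :=
  (INR n + 1/3) * (INR n + 2/3) * (INR n + 1)
  / (4 * (INR n + INR k + 4/3) * (INR n + INR k + 2) * (INR n + 3/2)).
Definition kratio3 (n k : nat) : R :=
  (INR k + 1/3) * (INR k + 1) / ((INR n + INR k + 4/3) * (INR n + INR k + 2)).
Definition wzP3 (n : nat) : R := 12 + 42 * INR n + 36 * INR n ^ 2.
Definition wzQ3 (n k : nat) : R :=
  14 + 12 * INR k + 39 * INR n + 18 * INR n * INR k + 27 * INR n ^ 2.

Lemma nratio3_bound (n k : nat) :
  (S n < k)%nat -> Rabs (nratio3 n k) * wzQ3 (S n) k <= 3/4 * wzQ3 n k.
Proof. revert n k; unfold nratio3, wzQ3; nratio_bound. Qed.

Lemma summand3_series : is_series summand3 (48 * S0).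
Proof.
  replace (48 * S0) with (wzP3 O / (1/4) * S0) by (unfold wzP3; simpl; field).
  apply (wz_kernel_series nratio3 kratio3) with (Q := wzQ3) (s := s0_term) (c := 3/4);
    try (unfold nratio3, kratio3, wzP3, wzQ3, summand3, s0_term; wz_side).
  - exact nratio3_bound.
  - apply (s0_term_mul_linear_lim _ 14 12); [lra | lra | intros; unfold wzQ3; simpl; ring].
  - exact s0_series.
Qed.

Definition summand4 (n : nat) : R :=
  (30 * INR n ^ 2 + 35 * INR n + 11) / ((1 + 2 * INR n) * (1 + INR n))
  * (poch (1/3) n / poch (7/6) n) * / (-4) ^ n.
Definition nratio4 (n k : nat) : R :=
  - ((INR n + INR k + 1) * (INR n + 2/3) * (INR n + 1)
     / ((INR n + INR k + 4/3) * (INR n + INR k + 2) * (INR n + 2))).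
Definition kratio4 (n k : nat) : R :=
  (INR k + 1/3) * (INR n + INR k + 1) / ((INR n + INR k + 4/3) * (INR n + INR k + 2)).
Definition wzP4 (n : nat) : R := 2 + 5 * INR n + 3 * INR n ^ 2.
Definition wzQ4 (n k : nat) : R :=
  4 + 2 * INR k + 10 * INR n + 3 * INR n * INR k + 6 * INR n ^ 2.

Lemma nratio4_bound (n k : nat) :
  (S n < k)%nat -> Rabs (nratio4 n k) * wzQ4 (S n) k <= 3/4 * wzQ4 n k.
Proof. revert n k; unfold nratio4, wzQ4; nratio_bound. Qed.

Lemma summand4_series : is_series summand4 (8 * S0).
Proof.
  replace (8 * S0) with (wzP4 O / (1/4) * S0) by (unfold wzP4; simpl; field).
  apply (wz_kernel_series nratio4 kratio4) with (Q := wzQ4) (s := s0_term) (c := 3/4);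
    try (unfold nratio4, kratio4, wzP4, wzQ4, summand4, s0_term; wz_side).
  - exact nratio4_bound.
  - apply (s0_term_mul_linear_lim _ 4 2); [lra | lra | intros; unfold wzQ4; simpl; ring].
  - exact s0_series.
Qed.

Definition summand5 (n : nat) : R :=
  (90 * INR n ^ 2 + 111 * INR n + 31)
    / ((1 + 6 * INR n) * (2 + 3 * INR n) * (1 + INR n))
  * (poch (1/3) n / poch (3/2) n) * / (-4) ^ n.
Definition nratio5 (n k : nat) : R :=
  - ((INR n + INR k + 1/3) * (INR n + 1/3) * (INR n + 1) * (INR n + 2/3)
     / ((INR n + INR k + 4/3) * (INR n + INR k + 2) * (INR n + 5/3) * (INR n + 2))).
Definition kratio5 (n k : nat) : R :=
  (INR n + INR k + 1/3) * (INR k + 1) / ((INR n + INR k + 4/3) * (INR n + INR k + 2)).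
Definition wzP5 (n : nat) : R := 6 + 15 * INR n + 9 * INR n ^ 2.
Definition wzQ5 (n k : nat) : R :=
  8 + 6 * INR k + 24 * INR n + 9 * INR n * INR k + 18 * INR n ^ 2.

Lemma nratio5_bound (n k : nat) :
  (S n < k)%nat -> Rabs (nratio5 n k) * wzQ5 (S n) k <= 3/4 * wzQ5 n k.
Proof. revert n k; unfold nratio5, wzQ5; nratio_bound. Qed.

Lemma summand5_series : is_series summand5 (12 * S0).
Proof.
  replace (12 * S0) with (wzP5 O / (1/2) * S0) by (unfold wzP5; simpl; field).
  apply (wz_kernel_series nratio5 kratio5) with (Q := wzQ5) (s := s0_term) (c := 3/4);
    try (unfold nratio5, kratio5, wzP5, wzQ5, summand5, s0_term; wz_side).
  - exact nratio5_bound.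
  - apply (s0_term_mul_linear_lim _ 8 6); [lra | lra | intros; unfold wzQ5; simpl; ring].
  - exact s0_series.
Qed.

Theorem proposition3p1 :
  is_series (fun k : nat => 1 / ((3 * INR k + 1) * (INR k + 1))) S0 /\
  is_series (fun n : nat =>
    (9 * INR n + 7) / ((INR n + 1) * (3 * INR n + 1))
    * (poch (5/3) n / poch (3/2) n) * / 4 ^ n) (6 * S0) /\
  is_series (fun n : nat =>
    (9 * INR n + 5) / (INR n + 1)
    * (poch (1/3) n ^ 2 / (poch (5/3) n * poch (7/6) n)) * / 4 ^ n) (4 * S0) /\
  is_series (fun n : nat =>
    (189 * INR n ^ 2 + 222 * INR n + 61)
    * (poch (1/3) n ^ 2 * poch 1 n / (poch (7/6) n * poch (3/2) n ^ 2))
    * / 64 ^ n) (48 * S0) /\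
  is_series (fun n : nat =>
    (30 * INR n ^ 2 + 35 * INR n + 11) / ((1 + 2 * INR n) * (1 + INR n))
    * (poch (1/3) n / poch (7/6) n) * / (-4) ^ n) (8 * S0) /\
  is_series (fun n : nat =>
    (90 * INR n ^ 2 + 111 * INR n + 31)
      / ((1 + 6 * INR n) * (2 + 3 * INR n) * (1 + INR n))
    * (poch (1/3) n / poch (3/2) n) * / (-4) ^ n) (12 * S0).
Proof.
  exact (conj s0_series (conj summand1_series (conj summand2_series
           (conj summand3_series (conj summand4_series summand5_series))))).
Qed.
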